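(* Let $\alpha>0$ and $F(t)=(1+t^{-\alpha})^{-1}$ for $t>0$, $F(0)=0$. A function $G\in\Delta_+$ is in the Boolean max-domain of attraction of $F$ if and only if the function $t\mapsto 1-\exp\big(1-G(t)^{-1}\big)$ is regularly varying of exponent $-\alpha$.
   Context: $\Delta_+$ is the set of functions $F:[0,\infty)\to[0,1]$ that are nondecreasing, right continuous and satisfy $\lim_{t\to\infty}F(t)=1$. Define $\sqcap$ on $[0,1]$ by $(x\sqcap y)^{-1}-1=(x^{-1}-1)+(y^{-1}-1)$ (conventions $0^{-1}=+\infty$, $(+\infty)^{-1}=0$, and $\exp(1-0^{-1})=0$), and the Boolean max-convolution of $F,G\in\Delta_+$ by $(F\boxed{\vee}G)(t)=F(t)\sqcap G(t)$; $G^{\boxed{\vee}n}$ denotes the $n$-fold Boolean max-convolution of $G$ with itself. $G\in\Delta_+$ is in the Boolean max-domain of attraction of $F\in\Delta_+$ if there exist $a_n>0$ ($n\in\mathbb{N}$) with $G^{\boxed{\vee}n}(a_nt)\to F(t)$ as $n\to\infty$ for all $t\ge0$. A function $h$ on $[0,\infty)$ is regularly varying of exponent $-\alpha$ if $\lim_{t\to+\infty}h(tx)/h(t)=x^{-\alpha}$ for all $x>0$. *)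

From Stdlib Require Import Reals Lra.
From Coquelicot Require Import Coquelicot.
Open Scope R_scope.

(* Delta_+ : F : [0,oo) -> [0,1], nondecreasing, right continuous, F(t) -> 1.
   Functions are R -> R; only values on [0,oo) matter. *)
Definition Delta_plus (F : R -> R) : Prop :=
  (forall t, 0 <= t -> 0 <= F t <= 1) /\
  (forall s t, 0 <= s -> s <= t -> F s <= F t) /\
  (forall t, 0 <= t -> filterlim F (at_right t) (locally (F t))) /\
  is_lim F p_infty 1.

(* Boolean meet on [0,1]: (x ⊓ y)^-1 - 1 = (x^-1 - 1) + (y^-1 - 1),
   with 0^-1 = +oo, (+oo)^-1 = 0. *)
Definition bmeet (x y : R) : R :=
  if Req_EM_T x 0 then 0
  else if Req_EM_T y 0 then 0
  else / ((/ x - 1) + (/ y - 1) + 1).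

Fixpoint bpow (n : nat) (x : R) : R :=
  match n with
  | O => 1
  | S m => bmeet x (bpow m x)
  end.

Definition bmaxconv_pow (n : nat) (G : R -> R) : R -> R :=
  fun t => bpow n (G t).

Definition in_BMDA (G F : R -> R) : Prop :=
  exists a : nat -> R, (forall n, 0 < a n) /\
    forall t, 0 <= t -> is_lim_seq (fun n => bmaxconv_pow n G (a n * t)) (F t).

Definition reg_var (alpha : R) (h : R -> R) : Prop :=
  forall x, 0 < x -> is_lim (fun t => h (t * x) / h t) p_infty (Rpower x (- alpha)).

Definition F_alpha (alpha : R) (t : R) : R :=
  if Rlt_dec 0 t then / (1 + Rpower t (- alpha)) else 0.

(* t |-> 1 - exp(1 - G(t)^{-1}), with exp(1 - 0^{-1}) = 0 *)
Definition h_of (G : R -> R) (t : R) : R :=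
  if Req_EM_T (G t) 0 then 1 else 1 - exp (1 - / G t).

From Stdlib Require Import Reals Lra Lia IndefiniteDescription.
From Coquelicot Require Import Coquelicot.
Open Scope R_scope.

(* For [0 < x <= 1] the Boolean power is explicit: [bpow n x = 1 / (1 + n (1/x - 1))], and
   [h = 1 - exp (1 - 1/x) = 1 - exp (-(1/x - 1))] is asymptotic to [1/x - 1] as [x -> 1].
   Hence [G^(n) (a_n t) -> (1 + t^-alpha)^-1] iff [n h (a_n t) -> t^-alpha], and for the
   antitone function [h] vanishing at infinity the existence of such [a_n] is equivalent to
   regular variation: one direction sandwiches [h (s x) / h s] between consecutive [a_n], the
   other takes [a_n] where [n h] crosses the level [1]. *)

Definition htail (x : R) : R := if Req_EM_T x 0 then 1 else 1 - exp (1 - / x).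

Lemma h_of_htail G t : h_of G t = htail (G t).
Proof. reflexivity. Qed.

Lemma htail_0 : htail 0 = 1.
Proof. unfold htail. destruct (Req_EM_T 0 0); lra. Qed.

Lemma htail_1 : htail 1 = 0.
Proof.
  unfold htail. destruct (Req_EM_T 1 0); [lra|].
  rewrite Rinv_1, Rminus_diag, exp_0. ring.
Qed.

Lemma inv_sub1_ge0 x : 0 < x <= 1 -> 0 <= / x - 1.
Proof.
  intros Hx. enough (1 <= / x) by lra.
  rewrite <- Rinv_1. apply Rinv_le_contravar; lra.
Qed.

(* With [v = /x - 1], [htail x = 1 - exp (-v)] lies between [v exp (-v)] and [v]. *)
Lemma htail_bounds x : 0 < x <= 1 ->
  0 <= htail x < 1 /\ htail x <= / x - 1 /\ (/ x - 1) * (1 - htail x) <= htail x.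
Proof.
  intros Hx. pose proof (inv_sub1_ge0 x Hx) as Hv.
  unfold htail. destruct (Req_EM_T x 0); [lra|].
  replace (1 - / x) with (- (/ x - 1)) by ring.
  set (v := / x - 1) in *.
  pose proof (exp_ineq1_le v). pose proof (exp_ineq1_le (- v)). pose proof (exp_pos (- v)).
  assert (exp v * exp (- v) = 1) by (rewrite <- exp_plus, Rplus_opp_r; apply exp_0).
  repeat split; nra.
Qed.

Lemma htail_range x : 0 <= x <= 1 -> 0 <= htail x <= 1.
Proof.
  intros Hx. destruct (Req_dec x 0) as [->|Hx0].
  - rewrite htail_0. lra.
  - pose proof (htail_bounds x ltac:(lra)). lra.
Qed.

Lemma htail_antitone x y : 0 <= x <= y -> y <= 1 -> htail y <= htail x.
Proof.
  intros Hxy Hy. destruct (Req_dec x 0) as [->|Hx0].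
  - rewrite htail_0. pose proof (htail_range y). lra.
  - unfold htail. destruct (Req_EM_T x 0); [lra|]. destruct (Req_EM_T y 0); [lra|].
    assert (Hinv : / y <= / x) by (apply Rinv_le_contravar; lra).
    destruct (Req_dec (/ y) (/ x)) as [E|Hne].
    + rewrite E. lra.
    + pose proof (exp_increasing (1 - / x) (1 - / y) ltac:(lra)). lra.
Qed.

Lemma bpow_S_0 n : bpow (S n) 0 = 0.
Proof. simpl. unfold bmeet. destruct (Req_EM_T 0 0); lra. Qed.

Lemma bpow_pos n x : 0 < x <= 1 -> bpow n x = / (1 + INR n * (/ x - 1)).
Proof.
  intros Hx. pose proof (inv_sub1_ge0 x Hx).
  induction n as [|n IH].
  - simpl. rewrite Rmult_0_l, Rplus_0_r, Rinv_1. reflexivity.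
  - simpl bpow. unfold bmeet. rewrite IH.
    assert (Hden : 0 < 1 + INR n * (/ x - 1)) by (pose proof (pos_INR n); nra).
    destruct (Req_EM_T x 0); [lra|].
    destruct (Req_EM_T (/ (1 + INR n * (/ x - 1))) 0) as [E|_].
    { exfalso. revert E. apply Rinv_neq_0_compat. lra. }
    rewrite Rinv_inv, S_INR. f_equal. ring.
Qed.

Lemma is_lim_seq_Rinv (u : nat -> R) (l : R) :
  is_lim_seq u l -> l <> 0 -> is_lim_seq (fun n => / u n) (/ l).
Proof.
  intros Hu Hl. apply (is_lim_seq_inv u l Hu).
  intro E. injection E. exact Hl.
Qed.

Lemma is_lim_seq_inv_INR : is_lim_seq (fun n => / INR n) 0.
Proof. apply (is_lim_seq_inv _ _ is_lim_seq_INR). discriminate. Qed.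

Lemma is_lim_seq_INR_mul_0 (u : nat -> R) (c : R) :
  is_lim_seq (fun n => INR n * u n) c -> is_lim_seq u 0.
Proof.
  intros Hu. apply is_lim_seq_ext_loc with (fun n => INR n * u n * / INR n).
  - exists 1%nat. intros n Hn. apply (le_INR 1) in Hn. simpl in Hn. field. lra.
  - rewrite <- (Rmult_0_r c). exact (is_lim_seq_mult' _ _ _ _ Hu is_lim_seq_inv_INR).
Qed.

Lemma is_lim_seq_eventually_gt (u : nat -> R) (l a : R) :
  is_lim_seq u l -> a < l -> eventually (fun n => a < u n).
Proof.
  intros Hu Hal. apply is_lim_seq_spec in Hu.
  destruct (Hu (mkposreal (l - a) ltac:(lra))) as [N HN]. exists N.
  intros n Hn. specialize (HN n Hn). apply Rabs_def2 in HN. simpl in HN. lra.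
Qed.

Lemma is_lim_seq_eventually_lt (u : nat -> R) (l a : R) :
  is_lim_seq u l -> l < a -> eventually (fun n => u n < a).
Proof.
  intros Hu Hla. apply is_lim_seq_spec in Hu.
  destruct (Hu (mkposreal (a - l) ltac:(lra))) as [N HN]. exists N.
  intros n Hn. specialize (HN n Hn). apply Rabs_def2 in HN. simpl in HN. lra.
Qed.

Lemma eventually_INR_mul_gt (c : R) : 0 < c -> eventually (fun n => 1 < INR n * c).
Proof.
  intros Hc. destruct (proj2 (is_lim_seq_spec _ _) is_lim_seq_INR (/ c)) as [N HN].
  exists N. intros n Hn. specialize (HN n Hn).
  apply (Rmult_lt_compat_r c) in HN; [|exact Hc]. rewrite Rinv_l in HN; lra.
Qed.

Lemma is_lim_seq_iff_of_sandwich (u w e : nat -> R) (c : R) :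
  eventually (fun n => 0 <= e n < 1 /\ w n * (1 - e n) <= u n <= w n) ->
  is_lim_seq e 0 -> (is_lim_seq u c <-> is_lim_seq w c).
Proof.
  intros Hev He.
  pose proof (is_lim_seq_minus' _ _ _ _ (is_lim_seq_const 1) He) as He1.
  rewrite Rminus_0_r in He1.
  split; intro H.
  - apply is_lim_seq_le_le_loc with u (fun n => u n / (1 - e n)).
    + apply (filter_imp _ _) with (2 := Hev). intros n [Hen Hn].
      split; [lra|]. apply Rmult_le_reg_r with (1 - e n); [lra|].
      unfold Rdiv. rewrite Rmult_assoc, Rinv_l; lra.
    + exact H.
    + pose proof (is_lim_seq_div' _ _ _ _ H He1 ltac:(lra)) as Hd.
      rewrite Rdiv_1_r in Hd. exact Hd.
  - apply is_lim_seq_le_le_loc with (fun n => w n * (1 - e n)) w.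
    + apply (filter_imp _ _) with (2 := Hev). intros n [_ Hn]. exact Hn.
    + pose proof (is_lim_seq_mult' _ _ _ _ H He1) as Hm.
      rewrite Rmult_1_r in Hm. exact Hm.
    + exact H.
Qed.

Section BooleanPowers.

Variable x : nat -> R.
Variable c : R.
Hypothesis c_ge0 : 0 <= c.

Lemma lim_bpow_iff_lim_INR_mul_inv (Hx : eventually (fun n => 0 < x n <= 1)) :
  is_lim_seq (fun n => bpow n (x n)) (/ (1 + c)) <->
  is_lim_seq (fun n => INR n * (/ x n - 1)) c.
Proof.
  set (w := fun n => 1 + INR n * (/ x n - 1)).
  assert (Hbpow : eventually (fun n => bpow n (x n) = / w n)).
  { apply (filter_imp _ _) with (2 := Hx). intros n Hn. apply bpow_pos, Hn. }
  split; intro H.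
  - apply is_lim_seq_ext with (fun n => / / w n - 1).
    { intro n. rewrite Rinv_inv. unfold w. ring. }
    replace c with (/ / (1 + c) - 1) by (rewrite Rinv_inv; ring).
    apply is_lim_seq_minus'; [|apply is_lim_seq_const].
    apply is_lim_seq_Rinv; [|apply Rinv_neq_0_compat; lra].
    exact (is_lim_seq_ext_loc _ _ _ Hbpow H).
  - apply is_lim_seq_ext_loc with (fun n => / w n).
    { apply (filter_imp _ _) with (2 := Hbpow). intros n E. symmetry. exact E. }
    apply is_lim_seq_Rinv; [|lra].
    apply is_lim_seq_plus'; [apply is_lim_seq_const | exact H].
Qed.

Lemma lim_INR_mul_htail_iff_lim_INR_mul_inv (Hx : eventually (fun n => 0 < x n <= 1)) :
  is_lim_seq (fun n => INR n * htail (x n)) c <->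
  is_lim_seq (fun n => INR n * (/ x n - 1)) c.
Proof.
  assert (Hiff : is_lim_seq (fun n => htail (x n)) 0 ->
    (is_lim_seq (fun n => INR n * htail (x n)) c <->
     is_lim_seq (fun n => INR n * (/ x n - 1)) c)).
  { apply is_lim_seq_iff_of_sandwich.
    apply (filter_imp _ _) with (2 := Hx). intros n Hn.
    pose proof (htail_bounds _ Hn). pose proof (pos_INR n).
    split; [lra|]. split; [rewrite Rmult_assoc|]; apply Rmult_le_compat_l; lra. }
  split; intro H.
  - exact (proj1 (Hiff (is_lim_seq_INR_mul_0 _ _ H)) H).
  - apply (Hiff); [|exact H].
    apply is_lim_seq_le_le_loc with (fun _ => 0) (fun n => / x n - 1).
    + apply (filter_imp _ _) with (2 := Hx). intros n Hn.
      pose proof (htail_bounds _ Hn). lra.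
    + apply is_lim_seq_const.
    + exact (is_lim_seq_INR_mul_0 _ _ H).
Qed.

Lemma lim_bpow_iff_lim_INR_mul_htail (Hx : forall n, 0 <= x n <= 1) :
  is_lim_seq (fun n => bpow n (x n)) (/ (1 + c)) <->
  is_lim_seq (fun n => INR n * htail (x n)) c.
Proof.
  assert (Hiff : eventually (fun n => x n <> 0) ->
    (is_lim_seq (fun n => bpow n (x n)) (/ (1 + c)) <->
     is_lim_seq (fun n => INR n * htail (x n)) c)).
  { intro Hev. assert (Hpos : eventually (fun n => 0 < x n <= 1)).
    { apply (filter_imp _ _) with (2 := Hev). intros n Hn. specialize (Hx n). lra. }
    rewrite lim_INR_mul_htail_iff_lim_INR_mul_inv by exact Hpos.
    apply lim_bpow_iff_lim_INR_mul_inv, Hpos. }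
  split; intro H; apply Hiff; try exact H.
  - destruct (is_lim_seq_eventually_gt _ _ 0 H) as [N HN].
    { apply Rinv_0_lt_compat. lra. }
    exists (S N). intros [|n] Hn E; [lia|].
    specialize (HN (S n) ltac:(lia)). rewrite E, bpow_S_0 in HN. lra.
  - apply (filter_imp _ _) with (2 := is_lim_seq_eventually_lt _ _ 1
      (is_lim_seq_INR_mul_0 _ _ H) ltac:(lra)).
    intros n Hn E. rewrite E, htail_0 in Hn. lra.
Qed.

End BooleanPowers.

Lemma lim_bpow_0 (x : R) : 0 <= x < 1 -> is_lim_seq (fun n => bpow n x) 0.
Proof.
  intros Hx. destruct (Req_dec x 0) as [->|Hx0].
  - apply is_lim_seq_ext_loc with (fun _ => 0); [|apply is_lim_seq_const].
    exists 1%nat. intros [|n] Hn; [lia|]. symmetry. apply bpow_S_0.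
  - assert (Hv : 0 < / x - 1).
    { enough (1 < / x) by lra. rewrite <- Rinv_1. apply Rinv_lt_contravar; lra. }
    apply is_lim_seq_le_le_loc with (fun _ => 0) (fun n => / (/ x - 1) * / INR n).
    + exists 1%nat. intros n Hn. apply (le_INR 1) in Hn. simpl in Hn.
      rewrite bpow_pos by lra. split.
      * left. apply Rinv_0_lt_compat. nra.
      * rewrite <- Rinv_mult. apply Rinv_le_contravar; nra.
    + apply is_lim_seq_const.
    + rewrite <- (Rmult_0_r (/ (/ x - 1))).
      apply is_lim_seq_mult'; [apply is_lim_seq_const | exact is_lim_seq_inv_INR].
Qed.

Lemma exists_upcrossing (a : nat -> R) (s : R) (N K : nat) :
  a N <= s -> s < a K -> (N <= K)%nat -> exists n, (N <= n)%nat /\ a n <= s < a (S n).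
Proof.
  intros HN HK. induction K as [|K IH]; intros HNK.
  - replace N with 0%nat in HN by lia. lra.
  - destruct (Nat.eq_dec N (S K)) as [->|HNK']; [lra|].
    destruct (Rle_lt_dec (a K) s) as [HaK|HaK].
    + exists K. split; [lia|lra].
    + apply IH; [exact HaK | lia].
Qed.

(* The index shift only costs the factor [(n + 1) / n -> 1]. *)
Lemma lim_shifted_ratios (p q : nat -> R) (L : R) : (forall n, 0 < q n) ->
  is_lim_seq (fun n => INR n * p n) L -> is_lim_seq (fun n => INR n * q n) 1 ->
  is_lim_seq (fun n => p n / q (S n)) L /\ is_lim_seq (fun n => p (S n) / q n) L.
Proof.
  intros Hq Hp Hq1.
  pose proof (is_lim_seq_plus' _ _ _ _ (is_lim_seq_const 1) is_lim_seq_inv_INR) as Hr.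
  rewrite Rplus_0_r in Hr.
  pose proof (proj1 (is_lim_seq_incr_1 _ _) Hp) as HpS.
  pose proof (proj1 (is_lim_seq_incr_1 _ _) Hq1) as HqS.
  assert (Hev : forall P : nat -> Prop, (forall n, 0 < INR n -> P n) -> eventually P).
  { intros P HP. exists 1%nat. intros n Hn. apply HP, lt_0_INR. lia. }
  split.
  - apply is_lim_seq_ext_loc with
      (fun n => INR n * p n / (INR (S n) * q (S n)) * (1 + / INR n)).
    { apply Hev. intros n Hn. pose proof (Hq (S n)). rewrite S_INR. field. lra. }
    replace L with (L / 1 * 1) by field.
    apply is_lim_seq_mult'; [apply is_lim_seq_div'; [exact Hp | exact HqS | lra] | exact Hr].
  - apply is_lim_seq_ext_loc with
      (fun n => INR (S n) * p (S n) / (INR n * q n) / (1 + / INR n)).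
    { apply Hev. intros n Hn. pose proof (Hq n). rewrite S_INR. field. lra. }
    replace L with (L / 1 / 1) by field.
    apply is_lim_seq_div'; [apply is_lim_seq_div'; [exact HpS | exact Hq1 | lra] | exact Hr | lra].
Qed.

(* [b] is the supremum of the superlevel set [{s >= 0 | lvl < f s}]. *)
Lemma exists_level_crossing (f : R -> R) (lvl s0 : R) :
  (forall s t, 0 <= s -> s <= t -> f t <= f s) ->
  (exists M, forall t, M < t -> f t <= lvl) -> 0 <= s0 -> lvl < f s0 ->
  exists b, s0 <= b /\ (forall s, 0 <= s < b -> lvl < f s) /\ (forall s, b < s -> f s <= lvl).
Proof.
  intros Hf [M HM] Hs0 Hfs0.
  set (E := fun s => 0 <= s /\ lvl < f s).
  assert (Hbound : bound E).
  { exists M. intros s [_ Hs]. apply Rnot_lt_le. intro HMs. specialize (HM s HMs). lra. }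
  destruct (completeness E Hbound (ex_intro _ s0 (conj Hs0 Hfs0))) as [b [Hub Hlub]].
  assert (Hs0b : s0 <= b) by (apply Hub; split; assumption).
  exists b. split; [exact Hs0b|]. split.
  - intros s [Hs Hsb]. apply Rnot_le_lt. intro Hfs.
    enough (b <= s) by lra. apply Hlub. intros e [He Hfe].
    apply Rnot_lt_le. intro Hse. pose proof (Hf s e Hs (Rlt_le _ _ Hse)). lra.
  - intros s Hbs. apply Rnot_lt_le. intro Hfs.
    enough (s <= b) by lra. apply Hub. split; [lra | exact Hfs].
Qed.

Section AntitoneTail.

Variable h : R -> R.
Hypothesis h_ge0 : forall t, 0 <= t -> 0 <= h t.
Hypothesis h_antitone : forall s t, 0 <= s -> s <= t -> h t <= h s.

Lemma ratio_le_of_antitone (s1 s t1 t2 : R) : 0 <= s1 <= s -> 0 <= t1 <= t2 -> 0 < h t2 ->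
  h s / h t1 <= h s1 / h t2.
Proof.
  intros Hs Ht Ht2. pose proof (h_antitone t1 t2 (proj1 Ht) (proj2 Ht)).
  apply Rmult_le_compat.
  - apply h_ge0. lra.
  - left. apply Rinv_0_lt_compat. lra.
  - apply h_antitone; lra.
  - apply Rinv_le_contravar; lra.
Qed.

Section FromSequence.

Variables (alpha : R) (a : nat -> R).
Hypothesis a_pos : forall n, 0 < a n.
Hypothesis lim_seq_h :
  forall t, 0 < t -> is_lim_seq (fun n => INR n * h (a n * t)) (Rpower t (- alpha)).

Lemma lim_seq_h_1 : is_lim_seq (fun n => INR n * h (a n)) 1.
Proof.
  assert (E : Rpower 1 (- alpha) = 1) by (unfold Rpower; rewrite ln_1, Rmult_0_r; apply exp_0).
  pose proof (lim_seq_h 1 Rlt_0_1) as H1. rewrite E in H1.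
  apply is_lim_seq_ext with (2 := H1). intro n. rewrite Rmult_1_r. reflexivity.
Qed.

(* If [h] vanished at [s0], then [n h (a_n s0 / s) -> (s0 / s)^-alpha > 0] would force
   [a_n < s] eventually, while [h (a_n) -> 0] forces [a_n > s] when [h s > 0]. *)
Lemma h_pos_of_lim_seq s0 : 0 < s0 -> 0 < h s0.
Proof.
  pose proof (is_lim_seq_INR_mul_0 _ _ lim_seq_h_1) as Hh0.
  intros Hs0. apply Rnot_le_lt. intro Hzero0.
  assert (Hzero : forall s, 0 < s -> h s <= 0).
  { intros s Hs. apply Rnot_lt_le. intro Hpos.
    assert (Ht : 0 < s0 / s) by (apply Rdiv_lt_0_compat; lra).
    destruct (filter_and _ _
      (is_lim_seq_eventually_gt _ _ 0 (lim_seq_h _ Ht) (exp_pos _))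
      (is_lim_seq_eventually_lt _ _ _ Hh0 Hpos)) as [N HN].
    destruct (HN N (Nat.le_refl N)) as [H1 H2]. pose proof (a_pos N).
    assert (Hlt : a N * (s0 / s) < s0).
    { apply Rnot_le_lt. intro Hle. pose proof (h_antitone s0 (a N * (s0 / s))).
      pose proof (pos_INR N). nra. }
    assert (a N < s).
    { apply Rmult_lt_reg_r with (s0 / s); [exact Ht|].
      replace (s * (s0 / s)) with s0 by (field; lra). exact Hlt. }
    pose proof (h_antitone (a N) s). lra. }
  destruct (is_lim_seq_eventually_gt _ _ 0 lim_seq_h_1 Rlt_0_1) as [N HN].
  specialize (HN N (Nat.le_refl N)). pose proof (Hzero _ (a_pos N)).
  pose proof (pos_INR N). nra.
Qed.

Lemma lim_seq_p_infty : is_lim_seq a p_infty.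
Proof.
  pose proof (is_lim_seq_INR_mul_0 _ _ lim_seq_h_1) as Hh0.
  apply is_lim_seq_spec. intros M. set (M' := Rmax M 0 + 1).
  assert (HM' : M < M' /\ 0 < M').
  { unfold M'. pose proof (Rmax_l M 0). pose proof (Rmax_r M 0). lra. }
  pose proof (h_pos_of_lim_seq M' (proj2 HM')) as HhM.
  apply (filter_imp _ _) with (2 := is_lim_seq_eventually_lt _ _ _ Hh0 HhM).
  intros n Hn. apply Rnot_le_lt. intro Hle.
  pose proof (h_antitone (a n) M' (Rlt_le _ _ (a_pos n))). lra.
Qed.

(* For [a_n <= s < a_(n+1)] the ratio [h (s x) / h s] is squeezed between
   [h (a_(n+1) x) / h (a_n)] and [h (a_n x) / h (a_(n+1))], both tending to [x^-alpha]. *)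
Lemma reg_var_of_lim_seq : reg_var alpha h.
Proof.
  intros x Hx.
  destruct (lim_shifted_ratios (fun n => h (a n * x)) (fun n => h (a n)) (Rpower x (- alpha)))
    as [HU HD].
  { intro n. apply h_pos_of_lim_seq, a_pos. }
  { exact (lim_seq_h x Hx). }
  { exact lim_seq_h_1. }
  apply is_lim_spec. intro eps.
  apply is_lim_seq_spec in HU, HD.
  destruct (HU eps) as [N1 HN1]. destruct (HD eps) as [N2 HN2].
  set (N := Nat.max N1 N2). exists (a N). intros s Hs.
  destruct (proj2 (is_lim_seq_spec _ _) lim_seq_p_infty s) as [N3 HN3].
  destruct (exists_upcrossing a s N (Nat.max N N3)) as [n [Hn [Hlo Hhi]]].
  { lra. }
  { apply HN3. lia. }
  { lia. }
  specialize (HN1 n ltac:(lia)). specialize (HN2 n ltac:(lia)).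
  apply Rabs_def2 in HN1, HN2.
  pose proof (a_pos n). pose proof (a_pos (S n)).
  assert (Hup : h (s * x) / h s <= h (a n * x) / h (a (S n))).
  { apply ratio_le_of_antitone; try split; try nra. apply h_pos_of_lim_seq. lra. }
  assert (Hdown : h (a (S n) * x) / h (a n) <= h (s * x) / h s).
  { apply ratio_le_of_antitone; try split; try nra. apply h_pos_of_lim_seq. lra. }
  apply Rabs_def1; lra.
Qed.

End FromSequence.

Section FromRegularVariation.

Variable alpha : R.
Hypothesis h_reg_var : reg_var alpha h.

(* A zero of [h] would make [h (2 s) / h s = 0 / 0 = 0] for large [s], not [2^-alpha]. *)
Lemma h_pos_of_reg_var t : 0 <= t -> 0 < h t.
Proof.
  intros Ht. apply Rnot_le_lt. intro Hle.
  assert (Hzero : forall s, t <= s -> h s = 0).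
  { intros s Hs. pose proof (h_ge0 s ltac:(lra)). pose proof (h_antitone t s Ht Hs). lra. }
  pose proof (proj2 (is_lim_spec _ _ _) (h_reg_var 2 Rlt_0_2)) as H2.
  destruct (H2 (mkposreal _ (exp_pos (- alpha * ln 2)))) as [M HM].
  set (s := Rmax M t + 1).
  assert (Hs : M < s /\ t <= s).
  { unfold s. pose proof (Rmax_l M t). pose proof (Rmax_r M t). lra. }
  specialize (HM s (proj1 Hs)). simpl in HM.
  rewrite (Hzero s), (Hzero (s * 2)) in HM by lra.
  unfold Rdiv, Rpower in HM. rewrite Rmult_0_l, Rminus_0_l, Rabs_Ropp, Rabs_pos_eq in HM.
  - lra.
  - left. apply exp_pos.
Qed.

Lemma lim_seq_ratio (a : nat -> R) (x : R) : is_lim_seq a p_infty -> 0 < x ->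
  is_lim_seq (fun n => h (a n * x) / h (a n)) (Rpower x (- alpha)).
Proof.
  intros Ha Hx.
  apply (is_lim_comp_seq (fun s => h (s * x) / h s) a p_infty); [exact (h_reg_var x Hx)| |exact Ha].
  exists 0%nat. intros. discriminate.
Qed.

Lemma lim_seq_inv_ratio (a : nat -> R) (y : R) : is_lim_seq a p_infty -> 0 < y ->
  is_lim_seq (fun n => h (a n) / h (a n * y)) (Rpower y alpha).
Proof.
  intros Ha Hy.
  apply is_lim_seq_ext with (fun n => / (h (a n * y) / h (a n))); [intro n; apply Rinv_div|].
  replace (Rpower y alpha) with (/ Rpower y (- alpha)) by (rewrite Rpower_Ropp; apply Rinv_inv).
  apply is_lim_seq_Rinv; [apply lim_seq_ratio; assumption | apply Rgt_not_eq, exp_pos].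
Qed.

Definition crosses_level (n : nat) (b : R) : Prop :=
  (forall s, 0 <= s < b -> 1 < INR n * h s) /\ (forall s, b < s -> INR n * h s <= 1).

Hypothesis alpha_pos : 0 < alpha.

(* With [y = (1 + d)^(1/alpha)], the crossing property pins [n h (a_n)] between
   [h (a_n) / h (a_n / y) -> 1 / (1 + d)] and [h (a_n) / h (a_n y) -> 1 + d]. *)
Lemma lim_seq_h_at_crossing (a : nat -> R) : is_lim_seq a p_infty ->
  eventually (fun n => crosses_level n (a n)) -> is_lim_seq (fun n => INR n * h (a n)) 1.
Proof.
  intros Ha Hcross. apply is_lim_seq_spec. intro eps.
  set (d := eps / 2). assert (Hd : 0 < d) by (unfold d; pose proof (cond_pos eps); lra).
  set (y := Rpower (1 + d) (/ alpha)).
  assert (Hy : 1 < y).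
  { pose proof (Rpower_lt (1 + d) 0 (/ alpha) ltac:(lra) (Rinv_0_lt_compat _ alpha_pos)) as H.
    rewrite Rpower_O in H by lra. exact H. }
  assert (Hyalpha : Rpower y alpha = 1 + d).
  { unfold y. rewrite Rpower_mult, Rinv_l, Rpower_1 by lra. reflexivity. }
  assert (Hyalpha' : Rpower (/ y) alpha = / (1 + d)).
  { rewrite <- Hyalpha, <- Rpower_Ropp. unfold Rpower. rewrite ln_Rinv by lra. f_equal. ring. }
  pose proof (lim_seq_inv_ratio a y Ha ltac:(lra)) as Hup. rewrite Hyalpha in Hup.
  pose proof (lim_seq_inv_ratio a (/ y) Ha ltac:(apply Rinv_0_lt_compat; lra)) as Hdown.
  rewrite Hyalpha' in Hdown.
  pose proof (is_lim_seq_eventually_lt _ _ (1 + 2 * d) Hup ltac:(lra)) as Hup_ev.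
  pose proof (is_lim_seq_eventually_gt _ _ (/ (1 + d) - d) Hdown ltac:(lra)) as Hdown_ev.
  pose proof (proj2 (is_lim_seq_spec _ _) Ha 0) as Hapos.
  destruct (filter_and _ _ (filter_and _ _ Hcross Hapos) (filter_and _ _ Hup_ev Hdown_ev))
    as [N HN].
  exists N. intros n Hn. destruct (HN n Hn) as [[[Hbelow Habove] Han] [HU HD]].
  assert (Hinv : 1 - d <= / (1 + d)).
  { apply Rmult_le_reg_r with (1 + d); [lra|]. rewrite Rinv_l by lra. nra. }
  assert (Hay : 0 < a n * / y < a n).
  { split; [apply Rmult_lt_0_compat; [|apply Rinv_0_lt_compat]; lra|].
    rewrite <- (Rmult_1_r (a n)) at 2. apply Rmult_lt_compat_l; [lra|].
    rewrite <- Rinv_1. apply Rinv_lt_contravar; lra. }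
  specialize (Habove (a n * y) ltac:(nra)). specialize (Hbelow (a n * / y) ltac:(lra)).
  pose proof (h_pos_of_reg_var (a n) ltac:(lra)).
  pose proof (h_pos_of_reg_var (a n * y) ltac:(nra)).
  pose proof (h_pos_of_reg_var (a n * / y) ltac:(lra)).
  assert (E1 : INR n * h (a n) = INR n * h (a n * y) * (h (a n) / h (a n * y))) by (field; lra).
  assert (E2 : INR n * h (a n) = INR n * h (a n * / y) * (h (a n) / h (a n * / y))) by (field; lra).
  assert (0 < h (a n) / h (a n * y)) by (apply Rdiv_lt_0_compat; lra).
  assert (0 < h (a n) / h (a n * / y)) by (apply Rdiv_lt_0_compat; lra).
  pose proof (pos_INR n). apply Rabs_def1; unfold d in *; nra.
Qed.

Hypothesis h_lim_0 : is_lim h p_infty 0.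

Lemma exists_crossing_point (n : nat) : 1 < INR n * h 1 -> exists b, 1 <= b /\ crosses_level n b.
Proof.
  intros Hn.
  assert (HnR : 0 < INR n).
  { destruct (pos_INR n) as [Hpos|E]; [exact Hpos|]. rewrite <- E in Hn. lra. }
  apply (exists_level_crossing (fun s => INR n * h s) 1 1).
  - intros s t Hs Hst. apply Rmult_le_compat_l; [apply pos_INR | apply h_antitone; assumption].
  - destruct (proj2 (is_lim_spec _ _ _) h_lim_0 (mkposreal _ (Rinv_0_lt_compat _ HnR)))
      as [M HM].
    exists M. intros t Ht. specialize (HM t Ht). simpl in HM. apply Rabs_def2 in HM.
    apply Rmult_le_reg_l with (/ INR n); [apply Rinv_0_lt_compat, HnR|].
    rewrite <- Rmult_assoc, Rinv_l; lra.
  - lra.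
  - exact Hn.
Qed.

Lemma exists_crossing_seq : exists a : nat -> R,
  forall n, 1 <= a n /\ (1 < INR n * h 1 -> crosses_level n (a n)).
Proof.
  apply (functional_choice (fun n b => 1 <= b /\ (1 < INR n * h 1 -> crosses_level n b))).
  intro n.
  destruct (Rlt_dec 1 (INR n * h 1)) as [Hn|Hn].
  - destruct (exists_crossing_point n Hn) as [b Hb]. exists b. tauto.
  - exists 1. split; [lra | tauto].
Qed.

Section CrossingSequence.

Variable a : nat -> R.
Hypothesis a_crossing : forall n, 1 <= a n /\ (1 < INR n * h 1 -> crosses_level n (a n)).

Lemma eventually_crosses_level M : 1 <= M ->
  eventually (fun n => 1 < INR n * h M /\ crosses_level n (a n)).
Proof.
  intros HM. pose proof (h_pos_of_reg_var M ltac:(lra)) as HhM.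
  apply (filter_imp _ _) with (2 := eventually_INR_mul_gt _ HhM).
  intros n Hn. split; [exact Hn|]. apply (proj2 (a_crossing n)).
  pose proof (h_antitone 1 M Rle_0_1 HM). pose proof (pos_INR n). nra.
Qed.

Lemma crossing_seq_p_infty : is_lim_seq a p_infty.
Proof.
  apply is_lim_seq_spec. intro M. set (M' := Rmax M 1 + 1).
  assert (HM' : M < M' /\ 1 <= M').
  { unfold M'. pose proof (Rmax_l M 1). pose proof (Rmax_r M 1). lra. }
  apply (filter_imp _ _) with (2 := eventually_crosses_level M' (proj2 HM')).
  intros n [Hn [_ Habove]]. apply Rnot_le_lt. intro Hle.
  specialize (Habove M' ltac:(lra)). lra.
Qed.

Lemma lim_seq_h_crossing_seq t : 0 < t ->
  is_lim_seq (fun n => INR n * h (a n * t)) (Rpower t (- alpha)).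
Proof.
  intros Ht.
  assert (Hlim1 : is_lim_seq (fun n => INR n * h (a n)) 1).
  { apply lim_seq_h_at_crossing; [exact crossing_seq_p_infty|].
    apply (filter_imp _ _) with (2 := eventually_crosses_level 1 (Rle_refl 1)).
    intros n [_ Hn]. exact Hn. }
  apply is_lim_seq_ext with (fun n => INR n * h (a n) * (h (a n * t) / h (a n))).
  { intro n. pose proof (h_pos_of_reg_var (a n) ltac:(pose proof (proj1 (a_crossing n)); lra)).
    field. lra. }
  rewrite <- (Rmult_1_l (Rpower t (- alpha))).
  apply is_lim_seq_mult'; [exact Hlim1|].
  apply lim_seq_ratio; [exact crossing_seq_p_infty | exact Ht].
Qed.

End CrossingSequence.

End FromRegularVariation.

End AntitoneTail.

Lemma h_of_ge0 G : Delta_plus G -> forall t, 0 <= t -> 0 <= h_of G t.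
Proof. intros [HG _] t Ht. apply htail_range, HG, Ht. Qed.

Lemma h_of_antitone G : Delta_plus G -> forall s t, 0 <= s -> s <= t -> h_of G t <= h_of G s.
Proof.
  intros [HG [Hmono _]] s t Hs Hst. apply htail_antitone.
  - split; [apply HG, Hs | apply Hmono; assumption].
  - apply HG. lra.
Qed.

Lemma h_of_lim_p_infty G : Delta_plus G -> is_lim (h_of G) p_infty 0.
Proof.
  intros (HG & _ & _ & Hlim).
  assert (Hinv : is_lim (fun t => / G t - 1) p_infty 0).
  { replace 0 with (/ 1 - 1) by (rewrite Rinv_1; ring).
    apply is_lim_minus'; [|apply is_lim_const].
    apply (is_lim_inv _ _ 1 Hlim). intro E. injection E. lra. }
  apply is_lim_le_le_loc with (fun _ => 0) (fun t => / G t - 1); [|apply is_lim_const|exact Hinv].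
  destruct (proj2 (is_lim_spec _ _ _) Hlim (mkposreal (1 / 2) ltac:(lra))) as [M HM].
  exists (Rmax M 0). intros t Ht.
  specialize (HM t ltac:(pose proof (Rmax_l M 0); lra)). simpl in HM. apply Rabs_def2 in HM.
  specialize (HG t ltac:(pose proof (Rmax_r M 0); lra)).
  pose proof (htail_bounds (G t) ltac:(lra)). rewrite h_of_htail. lra.
Qed.

Lemma lim_bmaxconv_pow_iff G alpha (a : nat -> R) t : Delta_plus G ->
  (forall n, 0 < a n) -> 0 < t ->
  is_lim_seq (fun n => bmaxconv_pow n G (a n * t)) (F_alpha alpha t) <->
  is_lim_seq (fun n => INR n * h_of G (a n * t)) (Rpower t (- alpha)).
Proof.
  intros [HG _] Ha Ht. unfold F_alpha. destruct (Rlt_dec 0 t) as [_|]; [|lra].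
  apply (lim_bpow_iff_lim_INR_mul_htail (fun n => G (a n * t))).
  - left. apply exp_pos.
  - intro n. apply HG. pose proof (Ha n). nra.
Qed.

Lemma lim_bmaxconv_pow_at_0 G alpha (a : nat -> R) : Delta_plus G -> reg_var alpha (h_of G) ->
  is_lim_seq (fun n => bmaxconv_pow n G (a n * 0)) (F_alpha alpha 0).
Proof.
  intros HG Hrv. unfold F_alpha. destruct (Rlt_dec 0 0) as [Hlt|_]; [lra|].
  apply is_lim_seq_ext with (fun n => bpow n (G 0)).
  { intro n. unfold bmaxconv_pow. rewrite Rmult_0_r. reflexivity. }
  apply lim_bpow_0.
  pose proof (h_pos_of_reg_var _ (h_of_ge0 G HG) (h_of_antitone G HG) alpha Hrv 0 (Rle_refl 0))
    as Hh0.
  destruct HG as [HG _]. specialize (HG 0 (Rle_refl 0)).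
  destruct (Req_dec (G 0) 1) as [E|]; [|lra].
  rewrite h_of_htail, E, htail_1 in Hh0. lra.
Qed.

Theorem corollary4p2 (alpha : R) (G : R -> R) :
  0 < alpha -> Delta_plus G ->
  (in_BMDA G (F_alpha alpha) <-> reg_var alpha (h_of G)).
Proof.
  intros Halpha HG.
  pose proof (h_of_ge0 G HG) as Hge0. pose proof (h_of_antitone G HG) as Hanti.
  split.
  - intros [a [Ha Hlim]]. apply (reg_var_of_lim_seq _ Hge0 Hanti alpha a Ha).
    intros t Ht. apply (lim_bmaxconv_pow_iff G alpha a t HG Ha Ht), Hlim. lra.
  - intros Hrv.
    destruct (exists_crossing_seq _ Hanti (h_of_lim_p_infty G HG)) as [a Ha].
    exists a. split; [intro n; pose proof (proj1 (Ha n)); lra|].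
    intros t Ht. destruct (Req_dec t 0) as [->|Ht0].
    + exact (lim_bmaxconv_pow_at_0 G alpha a HG Hrv).
    + apply lim_bmaxconv_pow_iff; [exact HG | intro n; pose proof (proj1 (Ha n)); lra | lra |].
      apply (lim_seq_h_crossing_seq _ Hge0 Hanti alpha Hrv Halpha a Ha). lra.
Qed.
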